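(* Let $\mathcal{X} = \mathbb{N}$ and $\mathcal{Y} = \{0,1\} \times \{0,1\}^*$. For $d \in \mathbb{N}$ and binary strings $A, B \in \{0,1\}^d$, define $h_{A,B} \colon \mathcal{X} \to \mathcal{Y}$ by \[ h_{A,B}(x) = \begin{cases} (0, A) & \text{if } (A \oplus B)(x \bmod d) = 0, \\ (1, B) & \text{if } (A \oplus B)(x \bmod d) = 1, \end{cases} \] and let \[ \mathcal{H}_{\mathrm{OTP}} = \big\{ h_{A,B} : A, B \in \{0,1\}^*,\ |A| = |B|,\ A \oplus B \text{ is balanced} \big\}. \] Then $\mathcal{H}_{\mathrm{OTP}}$ is a learnable hypothesis class (in both the transductive and PAC models), but there is no local regularizer for $\mathcal{H}_{\mathrm{OTP}}$ that transductively learns $\mathcal{H}_{\mathrm{OTP}}$.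
   Context: $\{0,1\}^*$ is the set of finite binary strings; $A \oplus B$ is the entrywise XOR of equal-length strings, and $(A\oplus B)(i)$ its $i$th entry, with positions of a length-$d$ string indexed by residues modulo $d$. A string is balanced if it has equally many $0$ entries and $1$ entries. Learning setting: a training set is a finite sequence $S=((x_i,y_i))_{i} \in (\mathcal{X}\times\mathcal{Y})^*$; a learner is a map $\mathcal{A}$ from training sets to functions $\mathcal{X}\to\mathcal{Y}$. The empirical risk of $f$ on $S=((x_i,y_i))_{i\in[n]}$ is $L_S(f)=\frac1n\sum_{i}[f(x_i)\neq y_i]$. For a class $\mathcal{H}\subseteq \mathcal{Y}^{\mathcal{X}}$, unlabeled points $S=(x_i)_{i\in[n]}\in\mathcal{X}^n$ and $h^*\in\mathcal{H}$, the transductive error of $\mathcal{A}$ is $L^{\mathrm{Trans}}_{S,h^*}(\mathcal{A}) = \frac1n\sum_{i\in[n]} [\mathcal{A}(S_{-i},h^* )(x_i)\neq h^*(x_i)]$, where $\mathcal{A}(S_{-i},h^* )$ is the output of $\mathcal{A}$ on the training set $((x_j,h^*(x_j)))_{j\neq i}$. $\mathcal{A}$ is a transductive learner for $\mathcal{H}$ (and $\mathcal{H}$ is transductively learnable) if there is $m:(0,1)\to\mathbb{N}$ such that for all $\epsilon\in(0,1)$, $h^*\in\mathcal{H}$ and $S\in\mathcal{X}^*$ with $|S|\ge m(\epsilon)$, $L^{\mathrm{Trans}}_{S,h^*}(\mathcal{A})\le\epsilon$. PAC learnability: there exist a learner $\mathcal{A}$ and $m:(0,1)^2\to\mathbb{N}$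 such that for every distribution $\mathcal{D}$ on $\mathcal{X}\times\mathcal{Y}$ with some $h\in\mathcal{H}$ satisfying $\Pr_{(x,y)\sim\mathcal{D}}[h(x)\ne y]=0$, and all $\epsilon,\delta\in(0,1)$, a sample $S\sim\mathcal{D}^n$ with $n\ge m(\epsilon,\delta)$ satisfies $\Pr_{(x,y)\sim\mathcal{D}}[\mathcal{A}(S)(x)\neq y]\le\epsilon$ with probability at least $1-\delta$. A local regularizer for $\mathcal{H}$ is a function $\psi:\mathcal{H}\times\mathcal{X}\to\mathbb{R}_{\ge 0}$. A learner $\mathcal{A}$ is induced by $\psi$ if for every training set $S$ and every $x\in\mathcal{X}$, $\mathcal{A}(S)(x)\in\{h(x): h\in\arg\min_{h\in\mathcal{H},\,L_S(h)=0}\psi(h,x)\}$. $\psi$ transductively learns $\mathcal{H}$ if every learner induced by $\psi$ is a transductive learner for $\mathcal{H}$. *)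

From Stdlib Require Import Reals List Arith Bool.
Import ListNotations.
Open Scope R_scope.

(** Domain X = nat, label space Y = {0,1} x {0,1}^*  (0 = false, 1 = true). *)
Definition X := nat.
Definition Y := (bool * list bool)%type.

Definition Y_eq_dec : forall y1 y2 : Y, {y1 = y2} + {y1 <> y2}.
Proof. decide equality; [apply (list_eq_dec bool_dec) | apply bool_dec]. Defined.

Fixpoint xorl (A B : list bool) : list bool :=
  match A, B with
  | a :: A', b :: B' => xorb a b :: xorl A' B'
  | _, _ => []
  end.

Definition balanced (s : list bool) : Prop :=
  count_occ bool_dec s false = count_occ bool_dec s true.

Definition h_AB (A B : list bool) (x : X) : Y :=
  if nth (x mod length A) (xorl A B) false then (true, B) else (false, A).

Definition H_OTP (h : X -> Y) : Prop :=
  exists A B : list bool,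
    length A = length B /\ balanced (xorl A B) /\ h = h_AB A B.

Definition trainset := list (X * Y).
Definition learner := trainset -> X -> Y.

(** L_S(h) = 0, written out: h agrees with every labelled example of S. *)
Definition consistent (S : trainset) (h : X -> Y) : Prop :=
  forall z, In z S -> h (fst z) = snd z.

Fixpoint remove_nth {T} (i : nat) (l : list T) : list T :=
  match l, i with
  | [], _ => []
  | _ :: l', 0 => l'
  | a :: l', S i' => a :: remove_nth i' l'
  end.

Definition label (h : X -> Y) (S : list X) : trainset := map (fun x => (x, h x)) S.

Definition trans_mistakes (Alg : learner) (S : list X) (h : X -> Y) : nat :=
  fold_right
    (fun i acc =>
       (if Y_eq_dec (Alg (label h (remove_nth i S)) (nth i S 0%nat)) (h (nth i S 0%nat))
        then 0 else 1) + acc)%nat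
    0%nat (seq 0 (length S)).

Definition trans_error (Alg : learner) (S : list X) (h : X -> Y) : R :=
  INR (trans_mistakes Alg S h) / INR (length S).

Definition trans_learner (H : (X -> Y) -> Prop) (Alg : learner) : Prop :=
  exists m : R -> nat,
    forall eps : R, 0 < eps < 1 ->
    forall h, H h ->
    forall S : list X, (m eps <= length S)%nat ->
      trans_error Alg S h <= eps.

Definition trans_learnable (H : (X -> Y) -> Prop) : Prop :=
  exists Alg, trans_learner H Alg.

(** Discrete probability on a countable type, via sums of nonnegative
    weights defined as suprema of finite sums. *)
Definition fsum {T} (f : T -> R) (l : list T) : R :=
  fold_right (fun x acc => f x + acc) 0 l.

Definition prob {T} (w : T -> R) (E : T -> Prop) (v : R) : Prop :=
  is_lub (fun r => exists l : list T, NoDup l /\ (forall z, In z l -> E z) /\ r = fsum w l) v.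

Definition is_distr {T} (p : T -> R) : Prop :=
  (forall z, 0 <= p z) /\ prob p (fun _ => True) 1.

(** Weight of a sample S under D^n (restricted to |S| = n in the events). *)
Definition sample_weight (p : X * Y -> R) (S : trainset) : R :=
  fold_right (fun z acc => p z * acc) 1 S.

Definition realizable (H : (X -> Y) -> Prop) (p : X * Y -> R) : Prop :=
  exists h, H h /\ prob p (fun z => h (fst z) <> snd z) 0.

Definition PAC_learnable (H : (X -> Y) -> Prop) : Prop :=
  exists (Alg : learner) (m : R -> R -> nat),
    forall p : X * Y -> R, is_distr p -> realizable H p ->
    forall eps delta : R, 0 < eps < 1 -> 0 < delta < 1 ->
    forall n : nat, (m eps delta <= n)%nat ->
      exists v, 1 - delta <= v /\
        prob (sample_weight p)
             (fun S => length S = n /\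
                exists e, prob p (fun z => Alg S (fst z) <> snd z) e /\ e <= eps) v.

Definition local_regularizer (H : (X -> Y) -> Prop) (psi : (X -> Y) -> X -> R) : Prop :=
  forall h x, H h -> 0 <= psi h x.

Definition in_argmin (H : (X -> Y) -> Prop) (psi : (X -> Y) -> X -> R)
  (S : trainset) (x : X) (h : X -> Y) : Prop :=
  H h /\ consistent S h /\
  forall h', H h' -> consistent S h' -> psi h x <= psi h' x.

(** Induced learner; the requirement is imposed whenever the argmin is
    nonempty. *)
Definition induced_by (H : (X -> Y) -> Prop) (psi : (X -> Y) -> X -> R) (Alg : learner) : Prop :=
  forall S x, (exists h, in_argmin H psi S x h) ->
    exists h, in_argmin H psi S x h /\ Alg S x = h x.

Definition psi_trans_learns (H : (X -> Y) -> Prop) (psi : (X -> Y) -> X -> R) : Prop :=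
  forall Alg, induced_by H psi Alg -> trans_learner H Alg.

(** A label [(0, A)] reveals [A] and a label [(1, B)] reveals [B]: a sample showing both kinds of
    labels determines the target, and a sample showing a single kind predicts that kind correctly.
    Hence a leave-one-out mistake needs a held-out point whose kind occurs nowhere else in the
    sample, which happens at most twice; and a PAC error above [eps] needs the sample to miss a
    kind of mass above [eps], which has probability at most [(1 - eps)^n].

    A local regularizer only compares hypotheses at the test point. Let [A ⊕ B] consist of [k]
    pairs of positions, each holding one [0] and one [1], with [A] constant on pairs, and train
    on the positions where [A ⊕ B] is [c], leaving out the one in pair [j]. By balancedness
    exactly two hypotheses are consistent, and they disagree at the held-out point (for [c = 1]
    the rival also flips [A] on pair [j], so that [B] is unchanged). Toggling the bits [a_j] of
    [A] and [z_j] of [A ⊕ B] yields four targets, consecutive ones being such rivals, alternately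
    for [c = 0] and [c = 1]; [psi] cannot strictly prefer the target all around this cycle, so
    the induced learner that breaks ties against the training labels errs at least once.
    Averaging over all [a] and [z] gives a target and a sample of size [k] with leave-one-out
    error at least [1/4]. *)

From Stdlib Require Import Reals List Lia Lra Bool ZArith.
From Stdlib Require Import Classical ClassicalEpsilon FunctionalExtensionality.
From mathcomp Require ssreflect ssrfun ssrbool eqtype ssrnat fintype finfun bigop zify.
Import ListNotations.
Open Scope R_scope.

Lemma length_xorl A B : length (xorl A B) = Nat.min (length A) (length B).
Proof. revert B; induction A; destruct B; simpl; auto. Qed.

Lemma xorl_comm A B : xorl A B = xorl B A.
Proof. revert B; induction A; destruct B; simpl; auto. rewrite xorb_comm, IHA; auto. Qed.

Lemma xorl_cancel_l A B : length A = length B -> xorl A (xorl A B) = B.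
Proof.
  revert B; induction A as [|a A IH]; intros [|b B] H; simpl in *; try lia; auto.
  rewrite IH by lia. rewrite <- xorb_assoc, xorb_nilpotent, xorb_false_l; reflexivity.
Qed.

Lemma xorl_inj_l A B B' : length A = length B -> length A = length B' ->
  xorl A B = xorl A B' -> B = B'.
Proof.
  intros HB HB' E. rewrite <- (xorl_cancel_l A B HB), <- (xorl_cancel_l A B' HB'), E.
  reflexivity.
Qed.

Lemma remove_nth_map {T U} (f : T -> U) i l :
  remove_nth i (map f l) = map f (remove_nth i l).
Proof. revert i; induction l; intros [|i]; simpl; auto. rewrite IHl; auto. Qed.

Lemma nth_In_remove_nth {T} (l : list T) i j d :
  i <> j -> (j < length l)%nat -> In (nth j l d) (remove_nth i l).
Proof.
  revert i j; induction l as [|a l IH]; intros i j Hij Hj; simpl in *; [lia|].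
  destruct i, j; simpl; try lia; auto.
  - apply nth_In; lia.
  - right; apply IH; lia.
Qed.

Lemma In_remove_nth_seq n i x :
  In x (remove_nth i (seq 0 n)) <-> (x < n)%nat /\ x <> i.
Proof.
  cut (forall s, In x (remove_nth i (seq s n)) <-> (s <= x < s + n)%nat /\ x <> (s + i)%nat).
  { intros H. rewrite H. lia. }
  revert i; induction n; intros i s; simpl.
  - destruct i; simpl; lia.
  - destruct i; simpl.
    + rewrite in_seq. lia.
    + rewrite IHn. lia.
Qed.

Lemma xorl_inj_r A A' B : length A = length B -> length A' = length B ->
  xorl A B = xorl A' B -> A = A'.
Proof.
  intros HA HA' E. apply (xorl_inj_l B); [lia|lia|]. rewrite !(xorl_comm B). exact E.
Qed.

Definition bits (n : nat) (f : nat -> bool) : list bool := map f (seq 0 n).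

Lemma length_bits n f : length (bits n f) = n.
Proof. unfold bits; rewrite length_map, length_seq; reflexivity. Qed.

Lemma nth_bits n f i : (i < n)%nat -> nth i (bits n f) false = f i.
Proof.
  intros H; unfold bits.
  rewrite (nth_indep _ false (f 0%nat)) by (rewrite length_map, length_seq; lia).
  rewrite map_nth, seq_nth by lia; reflexivity.
Qed.

Lemma count_occ_bool_total (l : list bool) :
  (count_occ bool_dec l true + count_occ bool_dec l false)%nat = length l.
Proof. induction l as [|[] l IH]; simpl; lia. Qed.

Lemma xorl_bits n f g : xorl (bits n f) (bits n g) = bits n (fun i => xorb (f i) (g i)).
Proof. unfold bits; generalize (seq 0 n); induction l; simpl; congruence. Qed.

Lemma consistent_label h l : consistent (label h l) h.
Proof. intros z Hz. unfold label in Hz. apply in_map_iff in Hz as [x [<- _]]. reflexivity. Qed.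

Definition loo_mistake (Alg : learner) (S : list X) (h : X -> Y) (i : nat) : nat :=
  if Y_eq_dec (Alg (label h (remove_nth i S)) (nth i S 0%nat)) (h (nth i S 0%nat)) then 0 else 1.

Lemma trans_mistakes_loo Alg S h :
  trans_mistakes Alg S h =
  fold_right (fun i acc => (loo_mistake Alg S h i + acc)%nat) 0%nat (seq 0 (length S)).
Proof. reflexivity. Qed.

(** * Transductive learnability *)

Lemma h_AB_eq A B x :
  h_AB A B x = (nth (x mod length A) (xorl A B) false,
                if nth (x mod length A) (xorl A B) false then B else A).
Proof. unfold h_AB; destruct (nth _ _ _); reflexivity. Qed.

Lemma h_AB_kind_eq A B x x' :
  fst (h_AB A B x) = fst (h_AB A B x') -> h_AB A B x = h_AB A B x'.
Proof. rewrite !h_AB_eq; simpl; intros ->; reflexivity. Qed.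

Definition kind (z : X * Y) : bool := fst (snd z).

Definition dummy_example : X * Y := (0%nat, (false, [])).

Definition otp_learner : learner := fun S x =>
  match find (fun z => negb (kind z)) S, find kind S with
  | Some (_, (_, A)), Some (_, (_, B)) => h_AB A B x
  | _, _ => snd (hd dummy_example S)
  end.

Lemma otp_learner_correct A B S x :
  consistent S (h_AB A B) -> (exists z, In z S /\ kind z = fst (h_AB A B x)) ->
  otp_learner S x = h_AB A B x.
Proof.
  intros HS [z [Hz Ez]].
  assert (Hlabel : forall z', In z' S -> snd z' = (kind z', if kind z' then B else A)).
  { intros z' Hz'. unfold kind. rewrite <- (HS z' Hz'), h_AB_eq. reflexivity. }
  assert (Hhd : (forall z1 z2, In z1 S -> In z2 S -> kind z1 = kind z2) ->
                snd (hd dummy_example S) = h_AB A B x).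
  { intros Hsame. assert (Hin : In (hd dummy_example S) S) by (destruct S; simpl in *; tauto).
    rewrite <- (HS _ Hin). apply h_AB_kind_eq. rewrite (HS _ Hin).
    fold (kind (hd dummy_example S)). rewrite (Hsame _ z Hin Hz). exact Ez. }
  unfold otp_learner.
  destruct (find (fun z => negb (kind z)) S) as [[x0 [c0 A0]]|] eqn:F0;
    destruct (find kind S) as [[x1 [c1 B1]]|] eqn:F1.
  - apply find_some in F0 as [H0 K0], F1 as [H1 K1].
    apply Hlabel in H0, H1. cbn in *. apply negb_true_iff in K0. subst c0 c1.
    injection H0 as ->. injection H1 as ->. reflexivity.
  - apply Hhd. intros z1 z2 H1 H2.
    rewrite (find_none _ _ F1 z1 H1), (find_none _ _ F1 z2 H2). reflexivity.
  - apply Hhd. intros z1 z2 H1 H2.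
    pose proof (find_none _ _ F0 z1 H1) as K1. pose proof (find_none _ _ F0 z2 H2) as K2.
    cbv beta in K1, K2. apply negb_false_iff in K1, K2. congruence.
  - apply Hhd. intros z1 z2 H1 H2.
    rewrite (find_none _ _ F1 z1 H1), (find_none _ _ F1 z2 H2). reflexivity.
Qed.

Definition lonely_positions {T} (dec : forall x y : T, {x = y} + {x <> y}) (l : list T) d :=
  filter (fun i => if in_dec dec (nth i l d) (remove_nth i l) then false else true)
         (seq 0 (length l)).

Lemma length_lonely_positions_le {T} dec (l V : list T) d :
  incl l V -> (length (lonely_positions dec l d) <= length V)%nat.
Proof.
  intros HV. unfold lonely_positions. rewrite <- (length_map (fun i => nth i l d)).
  apply NoDup_incl_length.
  - apply NoDup_map_NoDup_ForallPairs; [|apply NoDup_filter, seq_NoDup].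
    intros i j Hi Hj E. apply filter_In in Hi as [Hi Li], Hj as [Hj _]. apply in_seq in Hi, Hj.
    destruct (Nat.eq_dec i j) as [|Hij]; auto.
    destruct (in_dec dec (nth i l d) (remove_nth i l)) as [|Hlonely]; [discriminate|].
    exfalso. apply Hlonely. rewrite E. apply nth_In_remove_nth; lia.
  - intros y Hy. apply in_map_iff in Hy as [i [<- Hi]].
    apply filter_In in Hi as [Hi _]. apply in_seq in Hi. apply HV, nth_In; lia.
Qed.

Lemma fold_sum_le_count (g : nat -> nat) (P : nat -> bool) l :
  (forall i, In i l -> g i <= if P i then 1 else 0)%nat ->
  (fold_right (fun i acc => g i + acc) 0 l <= length (filter P l))%nat.
Proof.
  induction l as [|i l IH]; intros H; simpl; [lia|].
  specialize (H i (or_introl eq_refl)) as Hi.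
  assert (IHl : (fold_right (fun i acc => g i + acc) 0 l <= length (filter P l))%nat)
    by (apply IH; intros; apply H; simpl; auto).
  destruct (P i); simpl; lia.
Qed.

(* A leave-one-out mistake needs the kind of the held-out label to occur nowhere else. *)
Lemma otp_trans_mistakes_le_2 A B S : (trans_mistakes otp_learner S (h_AB A B) <= 2)%nat.
Proof.
  set (h := h_AB A B). set (l := map (fun x => fst (h x)) S).
  apply (Nat.le_trans _ (length (lonely_positions bool_dec l false))).
  2: { apply (length_lonely_positions_le bool_dec l [true; false]). intros [|] _; simpl; auto. }
  rewrite trans_mistakes_loo. unfold lonely_positions.
  replace (length l) with (length S) by (symmetry; apply length_map).
  apply fold_sum_le_count. intros i Hi. apply in_seq in Hi. unfold loo_mistake.
  destruct (Y_eq_dec _ _) as [|Hwrong]; [lia|].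
  destruct (in_dec bool_dec (nth i l false) (remove_nth i l)) as [Hin|]; [|lia].
  exfalso. apply Hwrong, otp_learner_correct; [apply consistent_label|].
  unfold l in Hin. rewrite remove_nth_map in Hin.
  rewrite (nth_indep _ false (fst (h 0%nat))) in Hin by (rewrite length_map; lia).
  rewrite (map_nth (fun x => fst (h x))) in Hin.
  apply in_map_iff in Hin as [y [Ey Hy]].
  exists (y, h y). split; [apply (in_map (fun x => (x, h x))); exact Hy | exact Ey].
Qed.

Lemma INR_up_ge r : r <= INR (Z.to_nat (up r)).
Proof.
  destruct (archimed r) as [Hup _].
  destruct (Z_le_gt_dec 0 (up r)) as [Hpos|Hneg].
  - rewrite INR_IZR_INZ, Z2Nat.id by exact Hpos. lra.
  - apply Z.gt_lt, IZR_lt in Hneg. pose proof (pos_INR (Z.to_nat (up r))). lra.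
Qed.

Lemma trans_learnable_OTP : trans_learnable H_OTP.
Proof.
  exists otp_learner, (fun eps => Z.to_nat (up (2 / eps))).
  intros eps Heps h [A [B [_ [_ ->]]]] S HS.
  apply le_INR in HS. pose proof (INR_up_ge (2 / eps)) as Hup.
  pose proof (le_INR _ _ (otp_trans_mistakes_le_2 A B S)) as Hm. simpl in Hm.
  assert (Hn : 2 <= eps * INR (length S)).
  { apply (Rmult_le_compat_l eps) in Hup, HS; try lra.
    replace (eps * (2 / eps)) with 2 in Hup by (field; lra). lra. }
  assert (0 < 2 / eps) by (apply Rdiv_lt_0_compat; lra).
  unfold trans_error, Rdiv. apply (Rmult_le_reg_r (INR (length S))); [lra|].
  rewrite Rmult_assoc, Rinv_l, Rmult_1_r by lra. lra.
Qed.

(** * PAC learnability *)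

Section FiniteSums.
Context {T : Type}.
Implicit Types (f g : T -> R) (l L M : list T).

Lemma fsum_app f l1 l2 : fsum f (l1 ++ l2) = fsum f l1 + fsum f l2.
Proof. induction l1; simpl; [lra|]. unfold fsum in *; simpl. rewrite IHl1; lra. Qed.

Lemma fsum_nonneg f l : (forall z, 0 <= f z) -> 0 <= fsum f l.
Proof. intros H; induction l; simpl; [lra|]. specialize (H a); lra. Qed.

Lemma fsum_le f g l : (forall z, In z l -> f z <= g z) -> fsum f l <= fsum g l.
Proof.
  induction l as [|a l IH]; intros H; simpl; [lra|].
  assert (f a <= g a) by (apply H; left; reflexivity).
  assert (fsum f l <= fsum g l) by (apply IH; intros; apply H; right; assumption).
  unfold fsum in *; lra.
Qed.

Lemma fsum_ext f g l : (forall z, In z l -> f z = g z) -> fsum f l = fsum g l.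
Proof. intros H; apply Rle_antisym; apply fsum_le; intros z Hz; rewrite (H z Hz); lra. Qed.

Lemma fsum_scal f c l : fsum (fun z => c * f z) l = c * fsum f l.
Proof. induction l; simpl; [lra|]. unfold fsum in *; simpl. rewrite IHl; lra. Qed.

Lemma fsum_filter f (P : T -> bool) l :
  fsum f (filter P l) = fsum (fun z => if P z then f z else 0) l.
Proof.
  induction l as [|a l IH]; [reflexivity|]. simpl filter. unfold fsum in *; simpl.
  destruct (P a); simpl; rewrite IH; lra.
Qed.

Lemma fsum_plus f g l : fsum (fun z => f z + g z) l = fsum f l + fsum g l.
Proof. induction l; simpl; [lra|]. unfold fsum in *; simpl. rewrite IHl; lra. Qed.

Lemma fsum_filter_orb_le f (P Q : T -> bool) l : (forall z, 0 <= f z) ->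
  fsum f (filter (fun z => P z || Q z) l) <= fsum f (filter P l) + fsum f (filter Q l).
Proof.
  intros Hf. rewrite !fsum_filter, <- fsum_plus. apply fsum_le. intros z _.
  specialize (Hf z). destruct (P z), (Q z); simpl; lra.
Qed.

Lemma fsum_filter_split f (P : T -> bool) l :
  fsum f l = fsum f (filter P l) + fsum f (filter (fun z => negb (P z)) l).
Proof.
  rewrite !fsum_filter. induction l as [|a l IH]; simpl; [lra|].
  unfold fsum in *; simpl. rewrite IH. destruct (P a); simpl; lra.
Qed.

Lemma fsum_incl f L M : (forall z, 0 <= f z) -> NoDup L -> incl L M -> fsum f L <= fsum f M.
Proof.
  intros Hf; revert M; induction L as [|a L IH]; intros M HN Hi.
  - apply fsum_nonneg; exact Hf.
  - assert (Ha : In a M) by (apply Hi; left; reflexivity).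
    apply in_split in Ha as [M1 [M2 ->]].
    inversion HN as [|? ? Ha HL]; subst.
    assert (Hi' : incl L (M1 ++ M2)).
    { intros x Hx. assert (Hx' : In x (M1 ++ a :: M2)) by (apply Hi; right; exact Hx).
      apply in_app_or in Hx'. apply in_or_app. destruct Hx' as [?|[<-|?]]; auto; contradiction. }
    specialize (IH _ HL Hi'). rewrite fsum_app in *. simpl. unfold fsum in *; simpl. lra.
Qed.

Lemma prob_ub f (E : T -> Prop) v L :
  prob f E v -> NoDup L -> (forall z, In z L -> E z) -> fsum f L <= v.
Proof. intros [Hub _] HN HE. apply Hub. exists L; auto. Qed.

Lemma prob_least f (E : T -> Prop) v c : prob f E v ->
  (forall L, NoDup L -> (forall z, In z L -> E z) -> fsum f L <= c) -> v <= c.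
Proof. intros [_ Hl] H. apply Hl. intros r [L [HN [HE ->]]]. apply H; auto. Qed.

Lemma prob_exists f (E : T -> Prop) c :
  (forall L, NoDup L -> (forall z, In z L -> E z) -> fsum f L <= c) -> exists v, prob f E v.
Proof.
  intros H.
  destruct (completeness (fun r => exists L, NoDup L /\ (forall z, In z L -> E z) /\ r = fsum f L))
    as [v Hv].
  - exists c. intros r [L [HN [HE ->]]]. apply H; auto.
  - exists 0, []. split; [constructor|]. split; [intros z []|reflexivity].
  - exists v; exact Hv.
Qed.

End FiniteSums.

Fixpoint tuples {T} (n : nat) (F : list T) : list (list T) :=
  match n with
  | O => [[]]
  | S n => flat_map (fun z => map (cons z) (tuples n F)) F
  end.

Definition prodw {T} (g : T -> R) (S : list T) : R := fold_right (fun z acc => g z * acc) 1 S.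

Lemma fsum_map {T U} (f : U -> R) (h : T -> U) l : fsum f (map h l) = fsum (fun z => f (h z)) l.
Proof. induction l; simpl; [reflexivity|]. unfold fsum in *; simpl. rewrite IHl; reflexivity. Qed.

Lemma fsum_prodw_flat_map_cons {T} (g : T -> R) L G :
  fsum (prodw g) (flat_map (fun z => map (cons z) L) G) = fsum g G * fsum (prodw g) L.
Proof.
  induction G as [|a G IH]; simpl; [unfold fsum; simpl; lra|].
  rewrite fsum_app, IH, fsum_map. unfold prodw at 1; simpl fold_right.
  rewrite (fsum_scal (prodw g)). simpl. ring.
Qed.

Lemma fsum_tuples {T} (g : T -> R) n F : fsum (prodw g) (tuples n F) = fsum g F ^ n.
Proof.
  induction n as [|n IH]; simpl; [unfold fsum, prodw; simpl; lra|].
  rewrite fsum_prodw_flat_map_cons, IH. reflexivity.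
Qed.

Lemma In_tuples {T} n (F : list T) S :
  In S (tuples n F) <-> length S = n /\ incl S F.
Proof.
  revert S; induction n as [|n IH]; intros S; simpl.
  - split.
    + intros [<-|[]]. split; [reflexivity|intros z []].
    + intros [HL _]. destruct S; [left; reflexivity|discriminate].
  - rewrite in_flat_map. split.
    + intros [a [Ha HS]]. apply in_map_iff in HS as [S' [<- HS']].
      apply IH in HS' as [HL Hincl]. split; [simpl; lia|]. intros z [<-|Hz]; auto.
    + intros [HL Hincl]. destruct S as [|a S]; [discriminate|].
      exists a. split; [apply Hincl; left; reflexivity|]. apply in_map, IH.
      split; [simpl in HL; lia|]. intros z Hz; apply Hincl; right; exact Hz.
Qed.

Lemma NoDup_flat_map_cons {T} (L : list (list T)) G :
  NoDup L -> NoDup G -> NoDup (flat_map (fun z => map (cons z) L) G).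
Proof.
  intros HL; induction G as [|a G IH]; intros HG; simpl; [constructor|].
  inversion HG as [|? ? Ha HG']; subst. apply NoDup_app.
  - apply NoDup_map_NoDup_ForallPairs; [intros x y _ _ E; injection E; auto|exact HL].
  - apply IH, HG'.
  - intros x Hx Hx'. apply in_map_iff in Hx as [S [<- _]].
    apply in_flat_map in Hx' as [b [Hb Hx']]. apply in_map_iff in Hx' as [S' [E _]].
    injection E as -> _. contradiction.
Qed.

Lemma NoDup_tuples {T} n (F : list T) : NoDup F -> NoDup (tuples n F).
Proof.
  intros HF; induction n as [|n IH]; simpl; [constructor; [intros []|constructor]|].
  apply NoDup_flat_map_cons; assumption.
Qed.

Lemma filter_forallb_tuples {T} (P : T -> bool) n F :
  filter (forallb P) (tuples n F) = tuples n (filter P F).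
Proof.
  induction n as [|n IH]; [reflexivity|]. simpl. rewrite <- IH. clear IH.
  generalize (tuples n F) as L. intros L.
  induction F as [|a F IHF]; [reflexivity|]. simpl. rewrite filter_app, IHF, filter_map_swap.
  simpl. destruct (P a); simpl; [reflexivity|]. rewrite filter_false. reflexivity.
Qed.

Lemma bernoulli x n : -1 <= x -> 1 + INR n * x <= (1 + x) ^ n.
Proof.
  intros Hx; induction n as [|n IH]; [simpl; lra|].
  rewrite S_INR; cbn [pow]. pose proof (pos_INR n). nra.
Qed.

Lemma pow_le_1 x n : 0 <= x <= 1 -> x ^ n <= 1.
Proof. intros Hx. rewrite <- (pow1 n). apply pow_incr, Hx. Qed.

Lemma pow_one_minus_mul_le_1 eps n : 0 <= eps <= 1 -> (1 - eps) ^ n * (1 + INR n * eps) <= 1.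
Proof.
  intros He. apply Rle_trans with ((1 - eps) ^ n * (1 + eps) ^ n).
  - apply Rmult_le_compat_l; [apply pow_le; lra | apply bernoulli; lra].
  - rewrite <- Rpow_mult_distr. apply pow_le_1. nra.
Qed.

Lemma prodw_nonneg {T} (g : T -> R) S : (forall z, 0 <= g z) -> 0 <= prodw g S.
Proof. intros H; induction S as [|a S IH]; simpl; [lra|]. pose proof (H a); nra. Qed.

Definition example_eq_dec : forall z z' : X * Y, {z = z'} + {z <> z'}.
Proof. decide equality; [apply Y_eq_dec | apply Nat.eq_dec]. Defined.

Definition has_kind (b : bool) (z : X * Y) : bool := Bool.eqb (kind z) b.

Section PAC.
Variable p : X * Y -> R.
Hypothesis p_nonneg : forall z, 0 <= p z.
Hypothesis p_total : prob p (fun _ => True) 1.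
Variables A B : list bool.
Hypothesis p_realizable : prob p (fun z => h_AB A B (fst z) <> snd z) 0.

Definition fits (z : X * Y) : bool := if Y_eq_dec (h_AB A B (fst z)) (snd z) then true else false.

Lemma fits_spec z : fits z = true <-> h_AB A B (fst z) = snd z.
Proof. unfold fits; destruct (Y_eq_dec _ _); split; congruence. Qed.

Lemma fsum_le_1 L : NoDup L -> fsum p L <= 1.
Proof. intros HN. apply (prob_ub p _ 1 L p_total HN). auto. Qed.

Lemma fsum_filter_fits L : fsum p (filter fits L) = fsum p L.
Proof.
  rewrite fsum_filter. apply fsum_ext. intros z _. unfold fits.
  destruct (Y_eq_dec _ _) as [|Hz]; [reflexivity|].
  assert (Hp : fsum p [z] <= 0).
  { apply (prob_ub p _ 0 [z] p_realizable); [repeat constructor; intros []|].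
    intros z' [<-|[]]; exact Hz. }
  unfold fsum in Hp; simpl in Hp. pose proof (p_nonneg z). lra.
Qed.

Lemma exists_fsum_gt eta : 0 < eta -> exists L, NoDup L /\ 1 - eta < fsum p L.
Proof.
  intros Heta. apply NNPP. intros Hno.
  assert (1 <= 1 - eta); [|lra].
  apply (prob_least p _ 1 _ p_total). intros L HN _.
  apply Rnot_lt_le. intros Hl. apply Hno. exists L; auto.
Qed.

Lemma sample_weight_le_1 n LS :
  NoDup LS -> (forall S, In S LS -> length S = n) -> fsum (sample_weight p) LS <= 1.
Proof.
  intros HN HL. set (F := nodup example_eq_dec (concat LS)).
  apply Rle_trans with (fsum (prodw p) (tuples n F)).
  - apply fsum_incl; [intros; apply prodw_nonneg; exact p_nonneg | exact HN |].
    intros S HS. apply In_tuples. split; [apply HL, HS|].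
    intros z Hz. apply nodup_In, in_concat. exists S; auto.
  - rewrite fsum_tuples. apply pow_le_1.
    split; [apply fsum_nonneg, p_nonneg | apply fsum_le_1, NoDup_nodup].
Qed.

Variable eps : R.

Definition light (b : bool) : Prop :=
  forall L, NoDup L -> (forall z, In z L -> kind z = b) -> fsum p L <= eps.

Lemma light_or_heavy b :
  exists L, NoDup L /\ (forall z, In z L -> kind z = b) /\ (light b \/ eps < fsum p L).
Proof.
  destruct (classic (light b)) as [Hl|Hl].
  - exists []. split; [constructor|]. split; [intros z []|left; exact Hl].
  - apply not_all_ex_not in Hl as [L Hl]. apply imply_to_and in Hl as [HN Hl].
    apply imply_to_and in Hl as [Hb Hl]. exists L. repeat split; auto. right; lra.
Qed.

(* A misclassified point in the support has a kind absent from [S], so [S] shows the other kind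
   only. *)
Lemma otp_error_le_eps S : 0 <= eps -> S <> [] -> (forall z, In z S -> fits z = true) ->
  (forall b, (forall z, In z S -> kind z = b) -> light (negb b)) ->
  exists e, prob p (fun z => otp_learner S (fst z) <> snd z) e /\ e <= eps.
Proof.
  intros Heps HS Hfit Hlight.
  destruct (prob_exists p (fun z => otp_learner S (fst z) <> snd z) 1) as [e He].
  { intros L HN _. apply fsum_le_1, HN. }
  exists e. split; [exact He|]. apply (prob_least p _ e _ He). intros L HN Herr.
  rewrite <- fsum_filter_fits.
  assert (Habsent : forall z, In z (filter fits L) -> forall y, In y S -> kind y <> kind z).
  { intros z Hz y Hy Hyz. apply filter_In in Hz as [Hz Hzfit]. apply (Herr z Hz).
    apply fits_spec in Hzfit. rewrite <- Hzfit. apply otp_learner_correct.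
    - intros y' Hy'. apply fits_spec, Hfit, Hy'.
    - exists y. split; [exact Hy|]. rewrite Hzfit. exact Hyz. }
  destruct (filter fits L) as [|z0 L'] eqn:EL; [simpl; lra|].
  assert (Hy0 : In (hd dummy_example S) S) by (destruct S; [congruence|left; reflexivity]).
  rewrite <- EL. apply (Hlight (negb (kind z0))).
  - intros y Hy. pose proof (Habsent z0 (or_introl eq_refl) y Hy).
    destruct (kind y), (kind z0); simpl; congruence.
  - apply NoDup_filter, HN.
  - intros z Hz. rewrite EL in Hz.
    pose proof (Habsent z0 (or_introl eq_refl) _ Hy0). pose proof (Habsent z Hz _ Hy0).
    destruct (kind z), (kind z0), (kind (hd dummy_example S)); simpl; congruence.
Qed.

Lemma fsum_le_support L M : NoDup L -> NoDup M -> (forall z, In z L -> fits z = true -> In z M) ->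
  fsum p L <= fsum p M.
Proof.
  intros HL HM Hincl. rewrite <- fsum_filter_fits.
  apply fsum_incl; [exact p_nonneg | apply NoDup_filter, HL |].
  intros z Hz. apply filter_In in Hz as [Hz Hfit]. apply Hincl; assumption.
Qed.

Lemma exists_good_support eta : 0 < eta ->
  exists G, NoDup G /\ (forall z, In z G -> fits z = true) /\ 1 - eta < fsum p G /\
    forall b, light b \/ eps < fsum p (filter (has_kind b) G).
Proof.
  intros Heta. destruct (exists_fsum_gt eta Heta) as [G0 [HN0 HG0]].
  destruct (light_or_heavy true) as [L1 [HN1 [HK1 H1]]].
  destruct (light_or_heavy false) as [L0 [HN0' [HK0 H0]]].
  set (G := filter fits (nodup example_eq_dec (G0 ++ L1 ++ L0))).
  assert (HNG : NoDup G) by apply NoDup_filter, NoDup_nodup.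
  assert (HinG : forall z, In z (G0 ++ L1 ++ L0) -> fits z = true -> In z G)
    by (intros z Hz Hfit; apply filter_In; split; [apply nodup_In, Hz | exact Hfit]).
  assert (Hheavy : forall b L, NoDup L -> incl L (L1 ++ L0) -> (forall z, In z L -> kind z = b) ->
            fsum p L <= fsum p (filter (has_kind b) G)).
  { intros b L HL Hsub Hb. apply fsum_le_support; [exact HL | apply NoDup_filter, HNG |].
    intros z Hz Hfit. apply filter_In. split.
    - apply HinG; [apply in_or_app; right; apply Hsub, Hz | exact Hfit].
    - unfold has_kind. rewrite (Hb z Hz). apply eqb_reflx. }
  exists G. split; [exact HNG|]. split; [intros z Hz; apply filter_In in Hz; tauto|]. split.
  - apply Rlt_le_trans with (fsum p G0); [exact HG0|].
    apply fsum_le_support; auto. intros z Hz; apply HinG, in_or_app; left; exact Hz.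
  - intros [|]; [destruct H1 as [|H1] | destruct H0 as [|H0]]; auto; right.
    + apply Rlt_le_trans with (fsum p L1); [exact H1|]. apply Hheavy; auto.
      intros z Hz; apply in_or_app; left; exact Hz.
    + apply Rlt_le_trans with (fsum p L0); [exact H0|]. apply Hheavy; auto.
      intros z Hz; apply in_or_app; right; exact Hz.
Qed.

Hypothesis eps_range : 0 <= eps <= 1.

Lemma one_kind_weight_le G n b : NoDup G -> eps < fsum p (filter (has_kind (negb b)) G) ->
  fsum (prodw p) (filter (forallb (has_kind b)) (tuples n G)) <= (1 - eps) ^ n.
Proof.
  intros HG Hheavy. rewrite filter_forallb_tuples, fsum_tuples.
  apply pow_incr. split; [apply fsum_nonneg, p_nonneg|].
  pose proof (fsum_filter_split p (has_kind b) G) as Hsplit.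
  rewrite (filter_ext (fun z => negb (has_kind b z)) (has_kind (negb b))) in Hsplit
    by (intros z; unfold has_kind; destruct (kind z), b; reflexivity).
  pose proof (fsum_le_1 G HG). lra.
Qed.

Definition pac_event (n : nat) (S : trainset) : Prop :=
  length S = n /\ exists e, prob p (fun z => otp_learner S (fst z) <> snd z) e /\ e <= eps.

(* A sample of [G^n] is bad only if it shows one kind while the other kind is heavy. *)
Lemma good_samples_weight G n : (1 <= n)%nat -> NoDup G -> (forall z, In z G -> fits z = true) ->
  (forall b, light b \/ eps < fsum p (filter (has_kind b) G)) ->
  exists LS, NoDup LS /\ (forall S, In S LS -> pac_event n S) /\
    fsum p G ^ n - 2 * (1 - eps) ^ n <= fsum (sample_weight p) LS.
Proof.
  intros Hn HG Hfit Hkinds.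
  set (bad b S := if excluded_middle_informative (light (negb b)) then false
                  else forallb (has_kind b) S).
  set (Tn := tuples n G).
  assert (Hbad : forall b, fsum (prodw p) (filter (bad b) Tn) <= (1 - eps) ^ n).
  { intros b. unfold bad. destruct (excluded_middle_informative (light (negb b))) as [|Hheavy].
    - rewrite filter_false. simpl. apply pow_le. lra.
    - apply one_kind_weight_le; [exact HG|]. destruct (Hkinds (negb b)); tauto. }
  exists (filter (fun S => negb (bad true S || bad false S)) Tn). split; [|split].
  - apply NoDup_filter, NoDup_tuples, HG.
  - intros S HS. apply filter_In in HS as [HS Hgood]. apply In_tuples in HS as [HL Hincl].
    split; [exact HL|]. apply otp_error_le_eps; [lra | | |].
    + intros ->. simpl in HL. lia.
    + intros z Hz. apply Hfit, Hincl, Hz.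
    + intros b Hb. apply NNPP. intros Hheavy.
      assert (Hbadb : bad b S = true).
      { unfold bad. destruct (excluded_middle_informative _); [contradiction|].
        apply forallb_forall. intros z Hz. unfold has_kind. rewrite (Hb z Hz). apply eqb_reflx. }
      destruct b; rewrite Hbadb in Hgood; [|rewrite orb_true_r in Hgood]; discriminate.
  - pose proof (fsum_filter_split (prodw p) (fun S => negb (bad true S || bad false S)) Tn)
      as Hsplit.
    rewrite (filter_ext (fun S => negb (negb (bad true S || bad false S)))
               (fun S => bad true S || bad false S)) in Hsplit
      by (intros S; apply negb_involutive).
    assert (Hbadsum : fsum (prodw p) (filter (fun S => bad true S || bad false S) Tn)
                      <= 2 * (1 - eps) ^ n).
    { eapply Rle_trans; [apply fsum_filter_orb_le; intros S; apply prodw_nonneg, p_nonneg|].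
      pose proof (Hbad true). pose proof (Hbad false). lra. }
    unfold Tn in *. rewrite fsum_tuples in Hsplit.
    change (@fsum trainset (sample_weight p)) with (@fsum (list (X * Y)) (prodw p)). lra.
Qed.

Lemma otp_pac_bound n delta : 0 < delta < 1 -> (1 <= n)%nat -> (1 - eps) ^ n <= delta / 4 ->
  exists v, 1 - delta <= v /\ prob (sample_weight p) (pac_event n) v.
Proof.
  intros Hdelta Hn Hpow.
  destruct (prob_exists (sample_weight p) (pac_event n) 1) as [v Hv].
  { intros LS HN HE. apply (sample_weight_le_1 n); [exact HN|]. intros S HS; apply HE, HS. }
  exists v. split; [|exact Hv].
  assert (Hnr : 1 <= INR n) by (apply (le_INR 1); exact Hn).
  (* By Bernoulli, [(1 - eta)^n >= 1 - n eta = 1 - delta/2]. *)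
  set (eta := delta / (2 * INR n)).
  assert (Heta : 0 < eta /\ INR n * eta = delta / 2).
  { unfold eta. split; [apply Rdiv_lt_0_compat; lra | field; lra]. }
  assert (Heta1 : eta <= 1 / 2).
  { unfold eta. apply Rmult_le_reg_r with (2 * INR n); [lra|].
    unfold Rdiv. rewrite Rmult_assoc, Rinv_l by lra. nra. }
  destruct (exists_good_support eta (proj1 Heta)) as [G [HG [Hfit [HG1 Hkinds]]]].
  destruct (good_samples_weight G n Hn HG Hfit Hkinds) as [LS [HNLS [HLS Hw]]].
  pose proof (prob_ub _ _ v LS Hv HNLS HLS).
  pose proof (bernoulli (- eta) n ltac:(lra)).
  assert ((1 - eta) ^ n <= fsum p G ^ n) by (apply pow_incr; lra).
  replace (1 + - eta) with (1 - eta) in * by ring. lra.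
Qed.
End PAC.

Lemma PAC_learnable_OTP : PAC_learnable H_OTP.
Proof.
  (* [(1 - eps)^n <= 1 / (1 + n eps) <= delta / 4] as soon as [n eps delta >= 4]. *)
  exists otp_learner, (fun eps delta => Z.to_nat (up (4 / (eps * delta)))).
  intros p [Hp0 Hp1] [h [[A [B [_ [_ ->]]]] Hreal]] eps delta Heps Hdelta n Hn.
  apply le_INR in Hn. pose proof (INR_up_ge (4 / (eps * delta))) as Hup.
  assert (Hlarge : 4 <= INR n * eps * delta).
  { assert (Hed : 0 < eps * delta) by nra.
    apply (Rmult_le_compat_r (eps * delta)) in Hup, Hn; try lra.
    replace (4 / (eps * delta) * (eps * delta)) with 4 in Hup by (field; lra). lra. }
  apply (otp_pac_bound p Hp0 Hp1 A B Hreal eps ltac:(lra) n delta Hdelta).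
  - destruct n; [simpl in Hlarge; lra | lia].
  - pose proof (pow_one_minus_mul_le_1 eps n ltac:(lra)).
    pose proof (pow_le (1 - eps) n ltac:(lra)). nra.
Qed.

(** * No local regularizer learns [H_OTP] *)

Fixpoint all_strings (n : nat) : list (list bool) :=
  match n with
  | O => [[]]
  | S n => map (cons true) (all_strings n) ++ map (cons false) (all_strings n)
  end.

Lemma In_all_strings l : In l (all_strings (length l)).
Proof.
  induction l as [|[] l IH]; simpl; auto; apply in_or_app; [left|right]; apply in_map; auto.
Qed.

Lemma version_space_finite S : S <> [] ->
  exists L, forall h, H_OTP h -> consistent S h -> In h L.
Proof.
  intros HS. destruct S as [|[x [c L0]] S]; [congruence|].
  exists (map (h_AB L0) (all_strings (length L0)) ++
          map (fun A => h_AB A L0) (all_strings (length L0))).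
  intros h [A [B [HL [_ ->]]]] Hc.
  specialize (Hc (x, (c, L0)) (or_introl eq_refl)). rewrite h_AB_eq in Hc.
  injection Hc as _ Hstr. apply in_or_app.
  destruct (nth _ _ _); rewrite <- Hstr.
  - right. apply (in_map (fun A => h_AB A B)). rewrite <- HL. apply In_all_strings.
  - left. apply in_map. rewrite HL. apply In_all_strings.
Qed.

Lemma exists_min_in_list {T} (P : T -> Prop) (f : T -> R) (L : list T) :
  (exists t, P t /\ In t L) -> exists m, P m /\ forall t, P t -> In t L -> f m <= f t.
Proof.
  induction L as [|a L IH]; intros [t [Pt Ht]]; [destruct Ht|].
  destruct (classic (exists t, P t /\ In t L)) as [HL|HL].
  - destruct (IH HL) as [m [Pm Hm]].
    destruct (classic (P a /\ f a <= f m)) as [[Pa Ha]|Ha].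
    + exists a. split; [exact Pa|]. intros t' Pt' [<-|Ht']; [lra|]. specialize (Hm t' Pt' Ht'); lra.
    + exists m. split; [exact Pm|]. intros t' Pt' [<-|Ht']; [|auto].
      apply Rnot_lt_le. intros Hlt. apply Ha. split; [exact Pt'|lra].
  - destruct Ht as [->|Ht]; [|exfalso; eauto].
    exists t. split; [exact Pt|]. intros t' Pt' [<-|Ht']; [lra|exfalso; eauto].
Qed.

Lemma argmin_exists psi S x : S <> [] ->
  (exists h, H_OTP h /\ consistent S h) -> exists m, in_argmin H_OTP psi S x m.
Proof.
  intros HS [h [Hh Hc]]. destruct (version_space_finite S HS) as [L HL].
  destruct (exists_min_in_list (fun h => H_OTP h /\ consistent S h) (fun h => psi h x) L)
    as [m [[Hm Cm] Hmin]]; [exists h; auto|].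
  exists m. repeat split; auto.
Qed.

Definition contrarian (psi : (X -> Y) -> X -> R) : learner := fun S x =>
  let y0 := snd (hd dummy_example S) in
  epsilon (inhabits (fun _ => y0))
    (fun h => in_argmin H_OTP psi S x h /\
              (h x <> y0 \/ forall g, in_argmin H_OTP psi S x g -> g x = y0)) x.

Lemma contrarian_spec psi S x :
  (exists h, in_argmin H_OTP psi S x h) ->
  let y0 := snd (hd dummy_example S) in
  exists h, in_argmin H_OTP psi S x h /\ contrarian psi S x = h x /\
            (h x <> y0 \/ forall g, in_argmin H_OTP psi S x g -> g x = y0).
Proof.
  intros [h Hh] y0. unfold contrarian. fold y0.
  match goal with |- context [epsilon ?i ?P] => set (e := epsilon i P); assert (He : P e) end.
  { apply epsilon_spec.
    destruct (classic (exists g, in_argmin H_OTP psi S x g /\ g x <> y0)) as [[g [Hg Hgx]]|Hno].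
    - exists g; auto.
    - exists h. split; [exact Hh|]. right. intros g Hg. apply NNPP. intros Hgx. eauto. }
  exists e. destruct He as [He1 He2]. auto.
Qed.

Lemma contrarian_induced psi : induced_by H_OTP psi (contrarian psi).
Proof.
  intros S x Hex. destruct (contrarian_spec psi S x Hex) as [h [Hh [E _]]]. eauto.
Qed.

Lemma contrarian_avoids psi S x g :
  in_argmin H_OTP psi S x g -> g x <> snd (hd dummy_example S) ->
  contrarian psi S x <> snd (hd dummy_example S).
Proof.
  intros Hg Hgx. destruct (contrarian_spec psi S x (ex_intro _ g Hg)) as [h [_ [-> [Hhx|Hall]]]].
  - exact Hhx.
  - exfalso. exact (Hgx (Hall g Hg)).
Qed.

(* Either some minimizer already disagrees at [x], or the target is a minimizer, and then so is
   the rival. *)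
Lemma contrarian_errs psi S x h h' :
  S <> [] -> H_OTP h -> consistent S h -> h x = snd (hd dummy_example S) ->
  (forall g, H_OTP g -> consistent S g -> g x = h x -> g = h) ->
  H_OTP h' -> consistent S h' -> h' x <> h x -> psi h' x <= psi h x ->
  contrarian psi S x <> h x.
Proof.
  intros HS Hh Hc Hhd Huniq Hh' Hc' Hdiff Hle. rewrite Hhd in *.
  destruct (argmin_exists psi S x HS (ex_intro _ h (conj Hh Hc))) as [m Hm].
  destruct (Y_eq_dec (m x) (snd (hd dummy_example S))) as [Em|Hm_diff].
  - destruct Hm as [HHm [Hcm Hmin]].
    pose proof (Huniq m HHm Hcm Em) as ->.
    apply (contrarian_avoids psi S x h'); [|exact Hdiff].
    repeat split; auto. intros g Hg Hcg. specialize (Hmin g Hg Hcg). lra.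
  - exact (contrarian_avoids psi S x m Hm Hm_diff).
Qed.

Definition pair_pos (j : nat) (b : bool) : nat := (2 * j + Nat.b2n b)%nat.

Lemma pair_pos_lt k j b : (j < k)%nat -> (pair_pos j b < 2 * k)%nat.
Proof. unfold pair_pos; destruct b; simpl; lia. Qed.

Lemma pair_pos_S j b : pair_pos (S j) b = S (S (pair_pos j b)).
Proof. unfold pair_pos; lia. Qed.

Lemma pair_pos_div2_odd i : pair_pos (Nat.div2 i) (Nat.odd i) = i.
Proof. unfold pair_pos. pose proof (Nat.div2_odd i). lia. Qed.

Lemma div2_pair_pos j b : Nat.div2 (pair_pos j b) = j.
Proof.
  unfold pair_pos; destruct b; simpl Nat.b2n.
  - replace (2 * j + 1)%nat with (S (2 * j)) by lia. apply Nat.div2_succ_double.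
  - rewrite Nat.add_0_r. apply Nat.div2_double.
Qed.

Lemma odd_pair_pos j b : Nat.odd (pair_pos j b) = b.
Proof.
  unfold pair_pos; destruct b; simpl Nat.b2n.
  - rewrite Nat.odd_add, Nat.odd_mul, Nat.odd_2. reflexivity.
  - rewrite Nat.add_0_r, Nat.odd_mul, Nat.odd_2. reflexivity.
Qed.

Lemma count_pairs_ge k : forall (C : list bool) (w : nat -> bool) c,
  length C = (2 * k)%nat ->
  (forall j, (j < k)%nat -> nth (pair_pos j (w j)) C false = c) ->
  (k <= count_occ bool_dec C c)%nat.
Proof.
  induction k as [|k IH]; intros C w c HL Hw; [lia|].
  destruct C as [|x [|y C]]; simpl in HL; try lia.
  assert (IHC : (k <= count_occ bool_dec C c)%nat).
  { apply (IH C (fun j => w (S j))); [lia|]. intros j Hj.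
    specialize (Hw (S j) ltac:(lia)). rewrite pair_pos_S in Hw. exact Hw. }
  specialize (Hw 0%nat ltac:(lia)).
  destruct (w 0%nat), x, y, c; simpl in *; subst; lia.
Qed.

(* With at most [k] copies of [c] and one in each pair, the other entry of every pair is
   [negb c]. *)
Lemma count_pairs_tight k : forall (C : list bool) (w : nat -> bool) c,
  length C = (2 * k)%nat ->
  (forall j, (j < k)%nat -> nth (pair_pos j (w j)) C false = c) ->
  (count_occ bool_dec C c <= k)%nat ->
  forall j, (j < k)%nat -> nth (pair_pos j (negb (w j))) C false = negb c.
Proof.
  induction k as [|k IH]; intros C w c HL Hw Hc j Hj; [lia|].
  destruct C as [|x [|y C]]; simpl in HL; try lia.
  assert (Hw' : forall j, (j < k)%nat -> nth (pair_pos j (w (S j))) C false = c).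
  { intros j' Hj'. specialize (Hw (S j') ltac:(lia)). rewrite pair_pos_S in Hw. exact Hw. }
  pose proof (count_pairs_ge k C _ c ltac:(lia) Hw') as Hge.
  specialize (Hw 0%nat ltac:(lia)).
  destruct j as [|j].
  - destruct (w 0%nat), x, y, c; simpl in *; subst; try lia; reflexivity.
  - rewrite pair_pos_S. apply (IH C (fun j => w (S j))); auto; [lia| |lia].
    destruct (w 0%nat), x, y, c; simpl in *; subst; lia.
Qed.

Definition pair_mask k (z : nat -> bool) : list bool :=
  bits (2 * k) (fun i => xorb (z (Nat.div2 i)) (Nat.odd i)).

Lemma length_pair_mask k z : length (pair_mask k z) = (2 * k)%nat.
Proof. apply length_bits. Qed.

Lemma nth_pair_mask k z j b :
  (j < k)%nat -> nth (pair_pos j b) (pair_mask k z) false = xorb (z j) b.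
Proof.
  intros Hj. unfold pair_mask. rewrite nth_bits by (apply pair_pos_lt; exact Hj).
  rewrite div2_pair_pos, odd_pair_pos. reflexivity.
Qed.

Lemma pair_mask_hits k z c j :
  (j < k)%nat -> nth (pair_pos j (xorb c (z j))) (pair_mask k z) false = c.
Proof. intros Hj. rewrite nth_pair_mask by exact Hj. destruct c, (z j); reflexivity. Qed.

Lemma pair_mask_balanced k z : balanced (pair_mask k z).
Proof.
  pose proof (count_occ_bool_total (pair_mask k z)) as Htotal.
  pose proof (count_pairs_ge k (pair_mask k z) _ true (length_pair_mask k z)
                (pair_mask_hits k z true)).
  pose proof (count_pairs_ge k (pair_mask k z) _ false (length_pair_mask k z)
                (pair_mask_hits k z false)).
  rewrite length_pair_mask in Htotal. unfold balanced. lia.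
Qed.

Lemma balanced_eq_pair_mask k z c C :
  length C = (2 * k)%nat -> balanced C ->
  (forall j, (j < k)%nat -> nth (pair_pos j (xorb c (z j))) C false = c) ->
  C = pair_mask k z.
Proof.
  intros HL Hbal Hhits.
  assert (Hcount : (count_occ bool_dec C c <= k)%nat).
  { pose proof (count_occ_bool_total C). unfold balanced in Hbal. destruct c; lia. }
  apply nth_ext with false false; [rewrite HL, length_pair_mask; reflexivity|].
  intros i Hi. rewrite HL in Hi. rewrite <- (pair_pos_div2_odd i).
  assert (Hj : (Nat.div2 i < k)%nat).
  { pose proof (pair_pos_div2_odd i). unfold pair_pos in *. destruct (Nat.odd i); simpl in *; lia. }
  rewrite nth_pair_mask by exact Hj.
  destruct (bool_dec (Nat.odd i) (xorb c (z (Nat.div2 i)))) as [->|Hother].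
  - rewrite Hhits by exact Hj. destruct c, (z (Nat.div2 i)); reflexivity.
  - replace (Nat.odd i) with (negb (xorb c (z (Nat.div2 i))))
      by (destruct (Nat.odd i), c, (z (Nat.div2 i)); simpl in *; congruence).
    rewrite (count_pairs_tight k C _ c HL Hhits Hcount _ Hj).
    destruct c, (z (Nat.div2 i)); reflexivity.
Qed.

Definition toggle (j : nat) (f : nat -> bool) : nat -> bool :=
  fun i => if Nat.eqb i j then negb (f i) else f i.

Lemma toggle_involutive j f : toggle j (toggle j f) = f.
Proof.
  apply functional_extensionality; intros i; unfold toggle.
  destruct (Nat.eqb i j); auto using negb_involutive.
Qed.

Lemma toggle_same j f : toggle j f j = negb (f j).
Proof. unfold toggle; rewrite Nat.eqb_refl; reflexivity. Qed.

Lemma toggle_other j f i : i <> j -> toggle j f i = f i.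
Proof. intros H; unfold toggle; apply Nat.eqb_neq in H; rewrite H; reflexivity. Qed.

Definition pair_const k (a : nat -> bool) : list bool := bits (2 * k) (fun i => a (Nat.div2 i)).

Lemma length_pair_const k a : length (pair_const k a) = (2 * k)%nat.
Proof. apply length_bits. Qed.

(* [A] is constant on pairs and [A ⊕ B = pair_mask k z]; [hard_sample k c z] picks in each pair
   the position where [A ⊕ B] is [c]. *)
Definition hard_target k (a z : nat -> bool) : X -> Y :=
  h_AB (pair_const k a) (xorl (pair_const k a) (pair_mask k z)).

Definition hard_sample k (c : bool) (z : nat -> bool) : list X :=
  map (fun j => pair_pos j (xorb c (z j))) (seq 0 k).

Lemma length_hard_sample k c z : length (hard_sample k c z) = k.
Proof. unfold hard_sample; rewrite length_map, length_seq; reflexivity. Qed.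

Lemma nth_hard_sample k c z j :
  (j < k)%nat -> nth j (hard_sample k c z) 0%nat = pair_pos j (xorb c (z j)).
Proof.
  intros Hj. unfold hard_sample.
  rewrite (nth_indep _ 0%nat (pair_pos 0 (xorb c (z 0%nat))))
    by (rewrite length_map, length_seq; exact Hj).
  rewrite (map_nth (fun j => pair_pos j (xorb c (z j)))), seq_nth by exact Hj. reflexivity.
Qed.

Lemma In_hard_training_set h k c z j y :
  In y (label h (remove_nth j (hard_sample k c z))) <->
  exists j', ((j' < k)%nat /\ j' <> j) /\
    y = (pair_pos j' (xorb c (z j')), h (pair_pos j' (xorb c (z j')))).
Proof.
  unfold label, hard_sample. rewrite remove_nth_map, map_map, in_map_iff.
  split.
  - intros [j' [<- Hj']]. apply In_remove_nth_seq in Hj'. exists j'; auto.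
  - intros [j' [Hj' ->]]. exists j'. split; [reflexivity|]. apply In_remove_nth_seq; exact Hj'.
Qed.

Lemma hard_target_H k a z : H_OTP (hard_target k a z).
Proof.
  exists (pair_const k a), (xorl (pair_const k a) (pair_mask k z)).
  rewrite xorl_cancel_l by (rewrite length_pair_const, length_pair_mask; reflexivity).
  rewrite length_xorl, length_pair_const, length_pair_mask, Nat.min_id.
  auto using pair_mask_balanced.
Qed.

Lemma hard_target_at k a z j b : (j < k)%nat ->
  hard_target k a z (pair_pos j b) =
  (xorb (z j) b, if xorb (z j) b then xorl (pair_const k a) (pair_mask k z) else pair_const k a).
Proof.
  intros Hj. unfold hard_target. rewrite h_AB_eq, length_pair_const.
  rewrite Nat.mod_small by (apply pair_pos_lt; exact Hj).
  rewrite xorl_cancel_l by (rewrite length_pair_const, length_pair_mask; reflexivity).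
  rewrite nth_pair_mask by exact Hj. reflexivity.
Qed.

Lemma hard_target_sample k a z c j : (j < k)%nat ->
  hard_target k a z (pair_pos j (xorb c (z j))) =
  (c, if c then xorl (pair_const k a) (pair_mask k z) else pair_const k a).
Proof.
  intros Hj. rewrite hard_target_at by exact Hj.
  replace (xorb (z j) (xorb c (z j))) with c by (destruct c, (z j); reflexivity). reflexivity.
Qed.

Lemma hard_target_B_toggle k a z j :
  xorl (pair_const k (toggle j a)) (pair_mask k (toggle j z)) =
  xorl (pair_const k a) (pair_mask k z).
Proof.
  unfold pair_const, pair_mask. rewrite !xorl_bits. unfold bits. apply map_ext; intros i.
  unfold toggle. destruct (Nat.eqb (Nat.div2 i) j); [|reflexivity].
  destruct (a (Nat.div2 i)), (z (Nat.div2 i)), (Nat.odd i); reflexivity.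
Qed.

Lemma hard_target_unique k a z c h : (0 < k)%nat -> H_OTP h ->
  (forall j, (j < k)%nat ->
     h (pair_pos j (xorb c (z j))) = hard_target k a z (pair_pos j (xorb c (z j)))) ->
  h = hard_target k a z.
Proof.
  intros Hk [A' [B' [HL [Hbal ->]]]] Hagree.
  set (A := pair_const k a) in *.
  assert (HlenA : length A = (2 * k)%nat) by apply length_pair_const.
  assert (HlenB : length (xorl A (pair_mask k z)) = (2 * k)%nat)
    by (rewrite length_xorl, HlenA, length_pair_mask; lia).
  assert (Hlabel : forall j, (j < k)%nat ->
            nth (pair_pos j (xorb c (z j)) mod length A') (xorl A' B') false = c /\
            (if c then B' else A') = (if c then xorl A (pair_mask k z) else A)).
  { intros j Hj. specialize (Hagree j Hj). rewrite h_AB_eq, hard_target_at in Hagree by exact Hj.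
    replace (xorb (z j) (xorb c (z j))) with c in Hagree by (destruct c, (z j); reflexivity).
    injection Hagree as Hc Hstr. rewrite Hc in Hstr. split; [exact Hc|].
    destruct c; exact Hstr. }
  destruct (Hlabel 0%nat Hk) as [_ Hstr].
  assert (HlenA' : length A' = (2 * k)%nat) by (destruct c; subst; lia).
  assert (Hmask : xorl A' B' = pair_mask k z).
  { apply (balanced_eq_pair_mask k z c); [rewrite length_xorl; lia | exact Hbal |].
    intros j Hj. destruct (Hlabel j Hj) as [Hc _].
    rewrite HlenA', Nat.mod_small in Hc by (apply pair_pos_lt; exact Hj). exact Hc. }
  unfold hard_target. fold A.
  assert (HAmask : xorl A (xorl A (pair_mask k z)) = pair_mask k z)
    by (apply xorl_cancel_l; rewrite HlenA, length_pair_mask; reflexivity).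
  destruct c; subst.
  - f_equal. apply xorl_inj_r with (B := xorl A (pair_mask k z)); try lia. congruence.
  - f_equal. apply xorl_inj_l with (A := A); try lia. congruence.
Qed.

Lemma hard_training_set_nonempty h k c z j :
  (2 <= k)%nat -> label h (remove_nth j (hard_sample k c z)) <> [].
Proof.
  intros Hk E. set (j' := if Nat.eqb j 0 then 1%nat else 0%nat).
  assert (Hj' : (j' < k)%nat /\ j' <> j) by (unfold j'; destruct (Nat.eqb_spec j 0); lia).
  assert (Hin : In (pair_pos j' (xorb c (z j')), h (pair_pos j' (xorb c (z j'))))
                   (label h (remove_nth j (hard_sample k c z))))
    by (apply In_hard_training_set; eauto).
  rewrite E in Hin. destruct Hin.
Qed.

Lemma hard_rival_agrees k (a z : nat -> bool) (c : bool) j j' : (j' < k)%nat -> j' <> j ->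
  hard_target k (if c then toggle j a else a) (toggle j z) (pair_pos j' (xorb c (z j'))) =
  hard_target k a z (pair_pos j' (xorb c (z j'))).
Proof.
  intros Hj' Hne. rewrite <- (toggle_other j z j') at 1 by exact Hne.
  rewrite !hard_target_sample by exact Hj'.
  destruct c; [rewrite hard_target_B_toggle|]; reflexivity.
Qed.

Lemma hard_sample_mistake (psi : (X -> Y) -> X -> R) k (a z : nat -> bool) (c : bool) j :
  (2 <= k)%nat -> (j < k)%nat ->
  psi (hard_target k (if c then toggle j a else a) (toggle j z)) (pair_pos j (xorb c (z j)))
    <= psi (hard_target k a z) (pair_pos j (xorb c (z j))) ->
  loo_mistake (contrarian psi) (hard_sample k c z) (hard_target k a z) j = 1%nat.
Proof.
  intros Hk Hj Hle. unfold loo_mistake. rewrite nth_hard_sample by exact Hj.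
  set (x := pair_pos j (xorb c (z j))) in *.
  set (h := hard_target k a z) in *.
  set (h' := hard_target k (if c then toggle j a else a) (toggle j z)) in *.
  set (S := label h (remove_nth j (hard_sample k c z))).
  destruct (Y_eq_dec _ _) as [E|]; [exfalso; revert E|reflexivity].
  assert (HinS : forall y, In y S -> exists j', ((j' < k)%nat /\ j' <> j) /\
            y = (pair_pos j' (xorb c (z j')), h (pair_pos j' (xorb c (z j')))))
    by (intros y; apply In_hard_training_set).
  assert (HS : S <> []) by apply hard_training_set_nonempty, Hk.
  apply (contrarian_errs psi S x h h' HS (hard_target_H k a z) (consistent_label _ _)).
  - assert (Hhd : In (hd dummy_example S) S) by (destruct S; [congruence|left; reflexivity]).
    destruct (HinS _ Hhd) as [j' [[Hj' _] ->]]. unfold h, x.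
    rewrite !hard_target_sample by assumption. reflexivity.
  - intros g Hg Hcg Hgx. apply (hard_target_unique k a z c g); [lia|exact Hg|].
    intros j' Hj'. destruct (Nat.eq_dec j' j) as [->|Hne]; [exact Hgx|].
    apply (Hcg (_, _)). apply In_hard_training_set; eauto.
  - apply hard_target_H.
  - intros y Hy. destruct (HinS y Hy) as [j' [[Hj' Hne] ->]]. apply hard_rival_agrees; assumption.
  - unfold h, h', x. rewrite hard_target_at, hard_target_sample, toggle_same by exact Hj.
    destruct c, (z j); discriminate.
  - exact Hle.
Qed.

Definition hard_mistake (psi : (X -> Y) -> X -> R) k (c : bool) (a z : nat -> bool) j : nat :=
  loo_mistake (contrarian psi) (hard_sample k c z) (hard_target k a z) j.

(* Consecutive targets in the cycle [(a, z), (a, z'), (a', z), (a', z')] (primes toggle bit [j])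
   are rivals at [pair_pos j (z j)], and [psi] cannot strictly increase all the way round. *)
Lemma hard_mistake_four_cycle psi k a z j : (2 <= k)%nat -> (j < k)%nat ->
  (1 <= hard_mistake psi k false a z j + hard_mistake psi k true a (toggle j z) j
        + hard_mistake psi k false (toggle j a) z j
        + hard_mistake psi k true (toggle j a) (toggle j z) j)%nat.
Proof.
  intros Hk Hj. unfold hard_mistake.
  set (v := fun a' z' => psi (hard_target k a' z') (pair_pos j (z j))).
  assert (Htrue : forall a', v (toggle j a') z <= v a' (toggle j z) ->
            loo_mistake (contrarian psi) (hard_sample k true (toggle j z))
              (hard_target k a' (toggle j z)) j = 1%nat).
  { intros a' Hle. apply hard_sample_mistake; auto.
    rewrite toggle_involutive, toggle_same, xorb_true_l, negb_involutive. exact Hle. }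
  destruct (Rle_dec (v a (toggle j z)) (v a z)) as [H0|H0].
  { rewrite (hard_sample_mistake psi k a z false j) by auto. lia. }
  destruct (Rle_dec (v (toggle j a) z) (v a (toggle j z))) as [H1|H1].
  { rewrite Htrue by exact H1. lia. }
  destruct (Rle_dec (v (toggle j a) (toggle j z)) (v (toggle j a) z)) as [H2|H2].
  { rewrite (hard_sample_mistake psi k (toggle j a) z false j) by auto. lia. }
  destruct (Rle_dec (v a z) (v (toggle j a) (toggle j z))) as [H3|H3].
  { rewrite (Htrue (toggle j a)); [lia|]. rewrite toggle_involutive. exact H3. }
  lra.
Qed.

Module Averaging.
Import ssreflect ssrfun ssrbool eqtype ssrnat fintype finfun bigop zify.
Local Open Scope nat_scope.

Lemma exists_ge_average (T : finType) (t0 : T) n (f : T -> 'I_n -> nat) :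
  (forall j, #|T| <= \sum_(t : T) f t j) -> exists t, n <= \sum_(j < n) f t j.
Proof.
move=> Hj; apply: Classical_Prop.NNPP => Hno.
pose g t := \sum_(j < n) f t j.
have Hsmall t : g t < n by rewrite ltnNge; apply/negP => Ht; apply: Hno; exists t.
have Hsum : n * #|T| <= \sum_(t : T) g t.
  rewrite /g exchange_big /= -[n in n * _]card_ord -sum_nat_const.
  by apply: leq_sum => j _; exact: Hj.
have Hlt : \sum_(t : T) (g t + 1) <= \sum_(t : T) n.
  by apply: leq_sum => t _; rewrite addn1; exact: Hsmall.
rewrite big_split /= !sum_nat_const in Hlt.
change #|xpredT| with #|T| in Hlt.
have : 0 < #|T| by apply/card_gt0P; exists t0.
lia.
Qed.

Lemma card_le_four_images (T : finType) (s t : T -> T) (fa fb : T -> nat) :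
  injective s -> injective t ->
  (forall x, 0 < fa x + fb (t x) + fa (s x) + fb (s (t x))) ->
  #|T| <= 2 * \sum_(x : T) (fa x + fb x).
Proof.
move=> s_inj t_inj Hcover.
have reindex (F : T -> nat) g : injective g -> \sum_(x : T) F (g x) = \sum_(x : T) F x.
  by move=> g_inj; rewrite [RHS](reindex_inj g_inj).
apply: (@leq_trans (\sum_(x : T) (fa x + fb (t x) + fa (s x) + fb (s (t x))))).
  rewrite -[#|T|]muln1 -sum_nat_const; exact: leq_sum.
rewrite !big_split /= (reindex fa s s_inj) (reindex (fun x => fb (s x)) t t_inj).
rewrite (reindex fb s s_inj) (reindex fb t t_inj).
lia.
Qed.

Definition of_ffun {k} (a : {ffun 'I_k -> bool}) : nat -> bool :=
  fun i => if insub i is Some o then a o else false.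

Definition ffun_toggle {k} (j : 'I_k) (a : {ffun 'I_k -> bool}) : {ffun 'I_k -> bool} :=
  [ffun i => if i == j then ~~ a i else a i].

Lemma ffun_toggle_involutive k (j : 'I_k) : involutive (ffun_toggle j).
Proof. by move=> a; apply/ffunP => i; rewrite !ffunE; case: eqP => //; rewrite negbK. Qed.

Lemma of_ffun_toggle k (j : 'I_k) a : of_ffun (ffun_toggle j a) = toggle j (of_ffun a).
Proof.
apply: FunctionalExtensionality.functional_extensionality => i.
rewrite /of_ffun /toggle; case: insubP => [o _ Ho | Hi].
- rewrite ffunE -Ho.
  case: (PeanoNat.Nat.eqb_spec o j) => [/val_inj -> | Hne]; first by rewrite eqxx.
  by case: eqP => // Eo; case: Hne; rewrite Eo.
- case: (PeanoNat.Nat.eqb_spec i j) => // Ei; move: Hi; by rewrite Ei ltn_ord.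
Qed.

Lemma foldr_seq_sum (g : nat -> nat) n :
  List.fold_right (fun i acc => g i + acc) 0 (List.seq 0 n) = \sum_(i < n) g i.
Proof.
elim: n g => [|n IH] g; first by rewrite big_ord0.
rewrite big_ord_recl (eq_bigr (fun i : 'I_n => g i.+1)) => [|i _]; last by rewrite lift0.
rewrite -(IH (fun i => g i.+1)) /= -List.seq_shift.
congr (_ + _); by elim: (List.seq 0 n) => //= i l ->.
Qed.

Lemma four_cycle_averaging k (m : bool -> (nat -> bool) -> (nat -> bool) -> nat -> nat) :
  (forall a z j, (j < k)%coq_nat ->
     (1 <= m false a z j + m true a (toggle j z) j + m false (toggle j a) z j
           + m true (toggle j a) (toggle j z) j)%coq_nat) ->
  exists c a z, (k <= 4 * List.fold_right (fun j acc => m c a z j + acc) 0 (List.seq 0 k))%coq_nat.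
Proof.
move=> Hcycle.
pose M c (t : {ffun 'I_k -> bool} * {ffun 'I_k -> bool}) (j : 'I_k) :=
  m c (of_ffun t.1) (of_ffun t.2) j.
have Hcover (j : 'I_k) : #|{: {ffun 'I_k -> bool} * {ffun 'I_k -> bool}}| <=
                          \sum_t 2 * (M false t j + M true t j).
  rewrite -big_distrr /=.
  apply: (card_le_four_images _ (fun t => (ffun_toggle j t.1, t.2))
            (fun t => (t.1, ffun_toggle j t.2)) (fun t => M false t j) (fun t => M true t j)).
  - apply: (can_inj (g := fun t => (ffun_toggle j t.1, t.2))) => -[a z] /=.
    by rewrite ffun_toggle_involutive.
  - apply: (can_inj (g := fun t => (t.1, ffun_toggle j t.2))) => -[a z] /=.
    by rewrite ffun_toggle_involutive.
  - move=> [a z]; rewrite /M /= !of_ffun_toggle; apply/leP; exact: Hcycle (ltP (ltn_ord j)).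
have [[a z] Hmany] := exists_ge_average _ ([ffun=> false], [ffun=> false]) _ _ Hcover.
rewrite -big_distrr big_split /= in Hmany.
have [Hfalse | Htrue] := leqP k (4 * \sum_(j < k) M false (a, z) j).
- by exists false, (of_ffun a), (of_ffun z); apply/leP; rewrite foldr_seq_sum.
- exists true, (of_ffun a), (of_ffun z); apply/leP; rewrite foldr_seq_sum.
  have arith x y : k <= 2 * (x + y) -> 4 * x < k -> k <= 4 * y by lia.
  exact: arith _ _ Hmany Htrue.
Qed.

End Averaging.

Lemma no_local_regularizer :
  ~ exists psi, local_regularizer H_OTP psi /\ psi_trans_learns H_OTP psi.
Proof.
  intros [psi [_ Hlearns]]. destruct (Hlearns _ (contrarian_induced psi)) as [m Hm].
  set (k := Nat.max 2 (m (1/5))).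
  destruct (Averaging.four_cycle_averaging k (hard_mistake psi k)) as [c [a [z Hmany]]].
  { intros a z j Hj. apply hard_mistake_four_cycle; unfold k; lia. }
  assert (Herr : trans_error (contrarian psi) (hard_sample k c z) (hard_target k a z) <= 1/5).
  { apply Hm; [lra | apply hard_target_H | rewrite length_hard_sample; unfold k; lia]. }
  assert (Hcount : trans_mistakes (contrarian psi) (hard_sample k c z) (hard_target k a z) =
    fold_right (fun j acc => (hard_mistake psi k c a z j + acc)%nat) 0%nat (seq 0 k))
    by (rewrite trans_mistakes_loo, length_hard_sample; reflexivity).
  unfold trans_error in Herr. rewrite Hcount, length_hard_sample in Herr.
  apply le_INR in Hmany. rewrite mult_INR in Hmany.
  assert (Hk : 0 < INR k) by (apply lt_0_INR; unfold k; lia).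
  unfold Rdiv in Herr. apply (Rmult_le_compat_r (INR k)) in Herr; [|lra].
  rewrite Rmult_assoc, Rinv_l, Rmult_1_r in Herr by lra.
  simpl in Hmany. lra.
Qed.

Theorem theorem1 :
  trans_learnable H_OTP /\ PAC_learnable H_OTP /\
  ~ (exists psi : (X -> Y) -> X -> R,
       local_regularizer H_OTP psi /\ psi_trans_learns H_OTP psi).
Proof.
  split; [exact trans_learnable_OTP|]. split; [exact PAC_learnable_OTP|].
  exact no_local_regularizer.
Qed.
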